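(* In the setting described in the context, the perimeter of $K$ satisfies $$\mathcal{P}=\int_{\partial K}\ell(\rho)^2\,\frac{d\omega}{ds}\,d\theta=\int_{\partial K}\kappa_g\,\ell(\rho)^2\,\frac{\ell(x)c(x)}{\ell(r)c(r)}\,d\theta=\int_{\partial K}\kappa_g\,\ell(\rho)^2\,\frac{1-k\,a(x)}{1-k\,a(r)}\,d\theta .$$
   Context: $M$ is $\mathbb{E}^2$, $\mathbb{S}^2$ or $\mathbb{H}^2$ of constant curvature $k$ ($k=0$, $k>0$, $k<0$). Functions: for $k>0$, $\ell(r)=\sin(\sqrt{k}r)/\sqrt{k}$, $a(r)=(1-\cos(\sqrt{k}r))/k$, $c(r)=\sqrt{k}\cot(\sqrt{k}r)$; for $k=0$, $\ell(r)=r$, $a(r)=r^2/2$, $c(r)=1/r$; for $k<0$, $\ell(r)=\sinh(\sqrt{-k}r)/\sqrt{-k}$, $a(r)=(1-\cosh(\sqrt{-k}r))/k$, $c(r)=\sqrt{-k}\coth(\sqrt{-k}r)$ (these make sense for negative $r$ too; $\ell(r)c(r)=1-ka(r)$). Setting: fix $O\in M$; $K\subset M$ is a compact convex set with nonempty interior and $C^2$ boundary (on $\mathbb{S}^2$, $K$ lies in the open hemisphere centered at $O$); $\partial K$ is oriented counterclockwise and parametrized by arclength $s$; $\kappa_g\ge0$ is its geodesic curvature. For $P=P(s)\in\partial K$ let $\lambda$ be the tangent geodesic (support line) of $K$ at $P$. For an angle $\omega$ let $\gamma_\omega$ be the unit-speed geodesic with $\gamma_\omega(0)=O$ and initial direction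 at angle $\omega$. Then $\omega=\omega(s)$ (chosen continuous in $s$) and $r=r(s)\in\mathbb{R}$ are determined by: $\lambda$ is perpendicular to $\gamma_\omega$ at $F=\gamma_\omega(r)$ and $K$ lies in the closed half-plane bounded by $\lambda$ containing $\gamma_\omega(t)$ for $t<r$. $x=x(s)$ is the signed distance along $\lambda$ from $F$ to $P$, positive iff $P$ lies on the ray from $F$ in the direction obtained by rotating $\gamma_\omega'(r)$ clockwise by $\pi/2$. Additionally $(\rho,\theta)$ are geodesic polar coordinates of $P$ about $O$; $\ell(\rho)^2\,d\theta$ is a smooth 1-form (extending across $O$), and the integrals are of 1-forms along $\partial K$. *)

From Stdlib Require Import Reals.
From Coquelicot Require Import Coquelicot.
Open Scope R_scope.

Definition ell (k r : R) : R :=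
  if Rlt_dec 0 k then sin (sqrt k * r) / sqrt k
  else if Req_EM_T k 0 then r
  else sinh (sqrt (- k) * r) / sqrt (- k).

Definition aa (k r : R) : R :=
  if Rlt_dec 0 k then (1 - cos (sqrt k * r)) / k
  else if Req_EM_T k 0 then r ^ 2 / 2
  else (1 - cosh (sqrt (- k) * r)) / k.

Definition cc (k r : R) : R :=
  if Rlt_dec 0 k then sqrt k * (cos (sqrt k * r) / sin (sqrt k * r))
  else if Req_EM_T k 0 then 1 / r
  else sqrt (- k) * (cosh (sqrt (- k) * r) / sinh (sqrt (- k) * r)).

(* The product l(r) c(r), with its removable singularity at r = 0 filled
   in by continuity (the paper uses l c = 1 - k a, valid also at 0). *)
Definition lc (k r : R) : R :=
  if Req_EM_T r 0 then 1 else ell k r * cc k r.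

(* The model of M (projective / gnomonic / Beltrami-Klein chart        *)
(* centred at O = (0,0)): points are u in R^2 with 1 + k|u|^2 > 0      *)
(* (all of R^2 = the open hemisphere centred at O if k > 0, a disk if  *)
(* k < 0), with the Riemannian metric                                  *)
(*   g_u(v,w) = ((1+k|u|^2) v.w - k (u.v)(u.w)) / (1+k|u|^2)^2,        *)
(* which has constant curvature k; geodesics are chart straight lines, *)
(* and g_O is the Euclidean inner product.                             *)
Definition pt := (R * R)%type.
Definition origin : pt := (0, 0).
Definition dot (u v : pt) : R := fst u * fst v + snd u * snd v.
Definition det2 (u v : pt) : R := fst u * snd v - snd u * fst v.
Definition padd (u v : pt) : pt := (fst u + fst v, snd u + snd v).
Definition psub (u v : pt) : pt := (fst u - fst v, snd u - snd v).
Definition pscal (t : R) (u : pt) : pt := (t * fst u, t * snd u).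
Definition rotl (v : pt) : pt := (- snd v, fst v).

Definition Dk (k : R) (u : pt) : R := 1 + k * dot u u.
Definition in_M (k : R) (u : pt) : Prop := 0 < Dk k u.

Definition metric (k : R) (u v w : pt) : R :=
  (Dk k u * dot v w - k * dot u v * dot u w) / (Dk k u) ^ 2.

Definition comp (u : pt) (i : nat) : R := match i with O => fst u | _ => snd u end.
Definition upd (u : pt) (i : nat) (t : R) : pt :=
  match i with O => (t, snd u) | _ => (fst u, t) end.
Definition basis (i : nat) : pt := match i with O => (1, 0) | _ => (0, 1) end.

Definition gco (k : R) (i j : nat) (u : pt) : R := metric k u (basis i) (basis j).
Definition gdet (k : R) (u : pt) : R :=
  gco k 0 0 u * gco k 1 1 u - gco k 0 1 u * gco k 1 0 u.
Definition ginv (k : R) (i j : nat) (u : pt) : R :=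
  match i, j with
  | O, O => gco k 1 1 u / gdet k u
  | S _, S _ => gco k 0 0 u / gdet k u
  | O, S _ => - gco k 0 1 u / gdet k u
  | S _, O => - gco k 1 0 u / gdet k u
  end.
Definition partial (f : pt -> R) (l : nat) (u : pt) : R :=
  Derive (fun t => f (upd u l t)) (comp u l).
Definition sum2 (f : nat -> R) : R := f 0%nat + f 1%nat.

Definition christ (k : R) (i j m : nat) (u : pt) : R :=
  / 2 * sum2 (fun l => ginv k i l u *
     (partial (gco k l m) j u + partial (gco k l j) m u - partial (gco k j m) l u)).

Definition vel (c : R -> pt) (s : R) : pt :=
  (Derive (fun t => fst (c t)) s, Derive (fun t => snd (c t)) s).
Definition acc (c : R -> pt) (s : R) : pt :=
  (Derive (Derive (fun t => fst (c t))) s, Derive (Derive (fun t => snd (c t))) s).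

Definition covacc (k : R) (c : R -> pt) (s : R) : pt :=
  let v := vel c s in
  let F i := comp (acc c s) i +
     sum2 (fun j => sum2 (fun m => christ k i j m (c s) * comp v j * comp v m)) in
  (F 0%nat, F 1%nat).

(* geodesic curvature of a unit-speed curve: kappa_g = <nabla_T T, N>
   = dA(T, nabla_T T), dA = sqrt(det g) dx^dy the Riemannian area form
   (N = positively oriented unit normal). *)
Definition geod_curv (k : R) (c : R -> pt) (s : R) : R :=
  sqrt (gdet k (c s)) * det2 (vel c s) (covacc k c s).

(* admissible parameter range of radial geodesics (|t| < pi/(2 sqrt k)
   when k > 0, i.e. inside the open hemisphere) *)
Definition in_range (k t : R) : Prop := k <= 0 \/ sqrt k * Rabs t < PI / 2.

(* unit-speed geodesic from O with initial direction at angle om: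
   gamma_om(t) = tan_k(t) (cos om, sin om), tan_k = l/(1 - k a). *)
Definition tan_k (k t : R) : R := ell k t / (1 - k * aa k t).
Definition gam (k om t : R) : pt := (tan_k k t * cos om, tan_k k t * sin om).

Definition seg_len (k : R) (F P : pt) : R :=
  RInt (fun u => sqrt (metric k (padd F (pscal u (psub P F))) (psub P F) (psub P F)))
       0 1.

(* signed distance x along lambda from F = gamma_om(r) to P: positive iff
   P lies on the ray from F in the direction obtained by rotating
   gamma_om'(r) clockwise by pi/2 (for vectors g-orthogonal to gamma', this
   is the side where det(gamma', .) < 0). *)
Definition xsd (k om r : R) (P : pt) : R :=
  let F := gam k om r in
  if Rlt_dec (det2 (vel (gam k om) r) (psub P F)) 0 then seg_len k F P
  else - seg_len k F P.

(* planar topology / convexity (geodesic convexity = chart convexity) *)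
Definition sqd (p q : pt) : R := dot (psub p q) (psub p q).
Definition intK (K : pt -> Prop) (p : pt) : Prop :=
  exists e, 0 < e /\ forall q, sqd p q < e -> K q.
Definition closK (K : pt -> Prop) (p : pt) : Prop :=
  forall e, 0 < e -> exists q, K q /\ sqd p q < e.
Definition bdry (K : pt -> Prop) (p : pt) : Prop := closK K p /\ ~ intK K p.
Definition compact_convex_body (k : R) (K : pt -> Prop) : Prop :=
  (forall p, closK K p -> K p) /\
  (exists B, forall p, K p -> dot p p <= B) /\
  (forall p, K p -> in_M k p) /\
  (forall p q t, K p -> K q -> 0 <= t <= 1 ->
       K (padd (pscal (1 - t) p) (pscal t q))) /\
  (exists p, intK K p).

(* In the projective chart centred at O geodesics are chart lines and g_O is
   Euclidean.  Write v, a for the chart velocity and acceleration of the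
   boundary curve c and D = 1 + k|c|^2.  Each integrand equals the density
   det(c, v)/D * det(v, a)/|v|^2:
   - l(rho)^2 theta' = det(c, v)/D, differentiating the polar angle of c;
   - omega is the chart angle of the normal (v2, -v1), since g-orthogonality
     to the ray O F at F is Euclidean orthogonality, so omega' = det(v, a)/|v|^2;
   - the Christoffel terms are tangent, so kappa_g = det(v, a)/(D sqrt D), and
     the explicit length of the segment F P gives (1 - k a(x))/(1 - k a(r))
     = 1/((1 - k a(r))^2 sqrt D), while g(v, v) = 1 forces
     |v|^2 = D^2 (1 - k a(r))^2.
   Finally 1 - density is the derivative of the periodic function
   arctan_k(<c, v>/D), where arctan_k inverts the chart coordinate tan_k of
   radial geodesics, so the density integrates to L over one period. *)

From Pilot Require Import Defs.
From Stdlib Require Import Reals Lra Lia Psatz.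
From Coquelicot Require Import Coquelicot.
Open Scope R_scope.

(** * The comparison functions *)

Definition cosk (k t : R) : R := 1 - k * aa k t.

Lemma cosh_sqr_sub_sinh_sqr x : cosh x ^ 2 - sinh x ^ 2 = 1.
Proof.
  unfold cosh, sinh.
  assert (H : exp x * exp (- x) = 1).
  { rewrite <- exp_plus, Rplus_opp_r. apply exp_0. }
  nra.
Qed.

Lemma cosh_pos x : 0 < cosh x.
Proof. unfold cosh. pose proof (exp_pos x). pose proof (exp_pos (- x)). lra. Qed.

Lemma cosh_opp x : cosh (- x) = cosh x.
Proof. unfold cosh. rewrite Ropp_involutive. lra. Qed.

Lemma sinh_pos x : 0 < x -> 0 < sinh x.
Proof. intro H. rewrite <- sinh_0. apply sinh_lt, H. Qed.

Lemma sqrt_pos_sqr (k : R) : 0 < k -> 0 < sqrt k /\ sqrt k * sqrt k = k.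
Proof. intro H. split; [apply sqrt_lt_R0 | apply sqrt_sqrt]; lra. Qed.

Lemma cosk_sqr_add_ell_sqr k t : cosk k t ^ 2 + k * ell k t ^ 2 = 1.
Proof.
  unfold cosk, ell, aa.
  destruct (Rlt_dec 0 k) as [Hk|Hk].
  - destruct (sqrt_pos_sqr k Hk) as [Hs Hss].
    pose proof (sin2_cos2 (sqrt k * t)) as H. unfold Rsqr in H.
    set (y := sqrt k * t) in *.
    replace (1 - k * ((1 - cos y) / k)) with (cos y) by (field; lra).
    replace (k * (sin y / sqrt k) ^ 2) with (sin y ^ 2)
      by (replace k with (sqrt k * sqrt k) at 1 by lra; field; lra).
    nra.
  - destruct (Req_EM_T k 0) as [->|Hk0]; [ring|].
    destruct (sqrt_pos_sqr (- k) ltac:(lra)) as [Hs Hss].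
    pose proof (cosh_sqr_sub_sinh_sqr (sqrt (- k) * t)) as H.
    set (y := sqrt (- k) * t) in *.
    replace (1 - k * ((1 - cosh y) / k)) with (cosh y) by (field; lra).
    replace (k * (sinh y / sqrt (- k)) ^ 2) with (- sinh y ^ 2)
      by (replace k with (- (sqrt (- k) * sqrt (- k))) at 1 by lra; field; lra).
    lra.
Qed.

Lemma is_derive_ell k t : is_derive (ell k) t (cosk k t).
Proof.
  unfold cosk, ell, aa.
  destruct (Rlt_dec 0 k) as [Hk|Hk].
  - pose proof (sqrt_lt_R0 k Hk). auto_derive; [easy | field; lra].
  - destruct (Req_EM_T k 0) as [->|Hk0]; [auto_derive; [easy | ring]|].
    pose proof (sqrt_lt_R0 (- k) ltac:(lra)).
    unfold sinh, cosh. auto_derive; [easy | field; lra].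
Qed.

Lemma is_derive_cosk k t : is_derive (cosk k) t (- k * ell k t).
Proof.
  unfold cosk, ell, aa.
  destruct (Rlt_dec 0 k) as [Hk|Hk].
  - destruct (sqrt_pos_sqr k Hk) as [Hs Hss].
    auto_derive; [easy|].
    set (q := sqrt k) in *. rewrite <- Hss. field; lra.
  - destruct (Req_EM_T k 0) as [->|Hk0]; [auto_derive; [easy | ring]|].
    destruct (sqrt_pos_sqr (- k) ltac:(lra)) as [Hs Hss].
    unfold sinh, cosh. auto_derive; [easy|].
    set (q := sqrt (- k)) in *. replace k with (- (q * q)) by lra. field; lra.
Qed.

Lemma cosk_pos k t : in_range k t -> 0 < cosk k t.
Proof.
  intro Hr. unfold cosk, aa.
  destruct (Rlt_dec 0 k) as [Hk|Hk].
  - replace (1 - k * ((1 - cos (sqrt k * t)) / k)) with (cos (sqrt k * t)) by (field; lra).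
    destruct Hr as [Hr|Hr]; [lra|].
    assert (Habs : Rabs (sqrt k * t) < PI / 2).
    { rewrite Rabs_mult, Rabs_right; [lra | left; apply sqrt_lt_R0, Hk]. }
    apply Rabs_def2 in Habs. apply cos_gt_0; lra.
  - destruct (Req_EM_T k 0) as [->|Hk0]; [lra|].
    replace (1 - k * ((1 - cosh (sqrt (- k) * t)) / k)) with (cosh (sqrt (- k) * t))
      by (field; lra).
    apply cosh_pos.
Qed.

Lemma cosk_opp k t : cosk k (- t) = cosk k t.
Proof.
  unfold cosk, aa. destruct (Rlt_dec 0 k).
  - rewrite <- Ropp_mult_distr_r, cos_neg. reflexivity.
  - destruct (Req_EM_T k 0); [rewrite <- Rsqr_pow2, <- Rsqr_neg, Rsqr_pow2; reflexivity|].
    rewrite <- Ropp_mult_distr_r, cosh_opp. reflexivity.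
Qed.

Lemma lc_cosk k t : (0 < k -> sqrt k * Rabs t < PI) -> lc k t = cosk k t.
Proof.
  intro Hr. unfold lc, cosk.
  destruct (Req_EM_T t 0) as [->|Ht].
  - unfold aa. destruct (Rlt_dec 0 k).
    + rewrite Rmult_0_r, cos_0. field. lra.
    + destruct (Req_EM_T k 0) as [->|]; [field|].
      rewrite Rmult_0_r, cosh_0. field. assumption.
  - unfold ell, cc, aa. destruct (Rlt_dec 0 k) as [Hk|Hk].
    + pose proof (sqrt_lt_R0 k Hk) as Hs. specialize (Hr Hk).
      assert (Hsin : sin (sqrt k * t) <> 0).
      { destruct (Rlt_or_le 0 t) as [Hp|Hn].
        - rewrite Rabs_right in Hr by lra. apply Rgt_not_eq, sin_gt_0; nra.
        - rewrite Rabs_left in Hr by lra.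
          replace (sqrt k * t) with (- (sqrt k * - t)) by ring. rewrite sin_neg.
          apply Ropp_neq_0_compat, Rgt_not_eq, sin_gt_0; nra. }
      field. repeat split; lra.
    + destruct (Req_EM_T k 0) as [->|Hk0]; [field; exact Ht|].
      pose proof (sqrt_lt_R0 (- k) ltac:(lra)) as Hs.
      assert (Hsinh : sinh (sqrt (- k) * t) <> 0).
      { destruct (Rlt_or_le 0 t) as [Hp|Hn].
        - apply Rgt_not_eq, sinh_pos. nra.
        - assert (sinh (sqrt (- k) * t) < sinh 0) by (apply sinh_lt; nra).
          rewrite sinh_0 in H. lra. }
      field. repeat split; lra.
Qed.

Lemma is_derive_tan_k k t : cosk k t <> 0 -> is_derive (tan_k k) t (/ cosk k t ^ 2).
Proof.
  intro H. unfold tan_k. fold (cosk k).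
  replace (/ cosk k t ^ 2) with
    ((cosk k t * cosk k t - ell k t * (- k * ell k t)) / cosk k t ^ 2).
  - apply (is_derive_div (ell k) (cosk k)); [apply is_derive_ell | apply is_derive_cosk | exact H].
  - replace (cosk k t * cosk k t - ell k t * (- k * ell k t)) with 1
      by (rewrite <- (cosk_sqr_add_ell_sqr k t); ring).
    unfold Rdiv; ring.
Qed.

Lemma one_add_k_tan_k_sqr k t : in_range k t -> 1 + k * tan_k k t ^ 2 = / cosk k t ^ 2.
Proof.
  intro Hr. pose proof (cosk_pos k t Hr).
  unfold tan_k. fold (cosk k t).
  replace (1 + k * (ell k t / cosk k t) ^ 2)
    with ((cosk k t ^ 2 + k * ell k t ^ 2) / cosk k t ^ 2) by (field; lra).
  rewrite cosk_sqr_add_ell_sqr. field; lra.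
Qed.

Lemma tan_k_nonneg k t : 0 <= t -> in_range k t -> 0 <= tan_k k t.
Proof.
  intros H0 Hr. pose proof (cosk_pos k t Hr) as Hc.
  unfold tan_k. fold (cosk k t).
  apply Rmult_le_pos; [|left; apply Rinv_0_lt_compat, Hc].
  unfold ell. destruct (Rlt_dec 0 k) as [Hk|Hk].
  - pose proof (sqrt_lt_R0 k Hk). destruct Hr as [Hr|Hr]; [lra|].
    rewrite Rabs_right in Hr by lra.
    apply Rmult_le_pos; [|left; apply Rinv_0_lt_compat; lra].
    apply sin_ge_0; pose proof PI_RGT_0; nra.
  - destruct (Req_EM_T k 0); [exact H0|].
    pose proof (sqrt_lt_R0 (- k) ltac:(lra)).
    apply Rmult_le_pos; [|left; apply Rinv_0_lt_compat; lra].
    destruct H0 as [H0| <-].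
    + left. apply sinh_pos. nra.
    + rewrite Rmult_0_r, sinh_0. lra.
Qed.

(* The inverse of [tan_k]: an antiderivative of [1 / (1 + k z^2)]. *)
Definition arctan_k (k z : R) : R :=
  if Rlt_dec 0 k then atan (sqrt k * z) / sqrt k
  else if Req_EM_T k 0 then z
  else (ln (1 + sqrt (- k) * z) - ln (1 - sqrt (- k) * z)) / (2 * sqrt (- k)).

Lemma artanh_args_pos k z : k < 0 -> 0 < 1 + k * z ^ 2 ->
  0 < 1 + sqrt (- k) * z /\ 0 < 1 - sqrt (- k) * z.
Proof.
  intros Hk Hz. destruct (sqrt_pos_sqr (- k) ltac:(lra)) as [Hs Hss].
  assert ((sqrt (- k) * z) ^ 2 < 1).
  { replace ((sqrt (- k) * z) ^ 2) with (sqrt (- k) * sqrt (- k) * z ^ 2) by ring.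
    rewrite Hss. lra. }
  split; nra.
Qed.

Lemma arctan_k_0 k : arctan_k k 0 = 0.
Proof.
  unfold arctan_k. destruct (Rlt_dec 0 k).
  - rewrite Rmult_0_r, atan_0. unfold Rdiv. ring.
  - destruct (Req_EM_T k 0); [reflexivity|].
    rewrite Rmult_0_r, Rplus_0_r, Rminus_0_r, Rminus_diag. unfold Rdiv. ring.
Qed.

Lemma is_derive_arctan_k k z : 0 < 1 + k * z ^ 2 ->
  is_derive (arctan_k k) z (/ (1 + k * z ^ 2)).
Proof.
  intro Hz. unfold arctan_k.
  destruct (Rlt_dec 0 k) as [Hk|Hk].
  - destruct (sqrt_pos_sqr k Hk) as [Hs Hss].
    auto_derive; [easy|]. unfold Rsqr.
    set (q := sqrt k) in *. rewrite <- Hss. field. split; [|lra].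
    rewrite <- Hss in Hz. nra.
  - destruct (Req_EM_T k 0) as [->|Hk0]; [auto_derive; [easy | field; lra]|].
    destruct (artanh_args_pos k z ltac:(lra) Hz) as [B1 B2].
    destruct (sqrt_pos_sqr (- k) ltac:(lra)) as [Hs Hss].
    auto_derive; [repeat split; lra|].
    set (q := sqrt (- k)) in *. replace k with (- (q * q)) by lra. field.
    repeat split; nra.
Qed.

Lemma in_range_arctan_k k z : in_range k (arctan_k k z).
Proof.
  destruct (Rlt_dec 0 k) as [Hk|Hk]; [right | left; lra].
  pose proof (sqrt_lt_R0 k Hk) as Hs. unfold arctan_k.
  destruct (Rlt_dec 0 k); [|lra].
  rewrite Rabs_div, (Rabs_right (sqrt k)) by lra.
  replace (sqrt k * (Rabs (atan (sqrt k * z)) / sqrt k)) with (Rabs (atan (sqrt k * z)))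
    by (field; lra).
  pose proof (atan_bound (sqrt k * z)). apply Rabs_def1; lra.
Qed.

Lemma sinh_div_cosh_half_ln A B : 0 < A -> 0 < B ->
  sinh ((ln A - ln B) / 2) / cosh ((ln A - ln B) / 2) = (A - B) / (A + B).
Proof.
  intros HA HB. set (y := (ln A - ln B) / 2).
  assert (Ey : exp y * exp y = A / B).
  { rewrite <- exp_plus. replace (y + y) with (ln A - ln B) by (unfold y; field).
    unfold Rminus. rewrite exp_plus, exp_Ropp, !exp_ln by lra. reflexivity. }
  pose proof (exp_pos y).
  unfold sinh, cosh. rewrite exp_Ropp.
  transitivity ((exp y * exp y - 1) / (exp y * exp y + 1)); [field; split; nra|].
  rewrite Ey. field. split; lra.
Qed.

Lemma tan_k_arctan_k k z : 0 < 1 + k * z ^ 2 -> tan_k k (arctan_k k z) = z.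
Proof.
  intro Hz. unfold tan_k, ell, aa, arctan_k.
  destruct (Rlt_dec 0 k) as [Hk|Hk].
  - pose proof (sqrt_lt_R0 k Hk) as Hs.
    replace (sqrt k * (atan (sqrt k * z) / sqrt k)) with (atan (sqrt k * z)) by (field; lra).
    pose proof (tan_atan (sqrt k * z)) as Ht. unfold tan in Ht.
    pose proof (cos_gt_0 (atan (sqrt k * z))) as Hc.
    pose proof (atan_bound (sqrt k * z)).
    replace (1 - k * ((1 - cos (atan (sqrt k * z))) / k)) with (cos (atan (sqrt k * z)))
      by (field; lra).
    assert (cos (atan (sqrt k * z)) <> 0) by (apply Rgt_not_eq, Hc; lra).
    set (u := atan (sqrt k * z)) in *.
    apply Rmult_eq_reg_l with (sqrt k); [|lra].
    rewrite <- Ht. field. split; lra.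
  - destruct (Req_EM_T k 0) as [->|Hk0]; [field|].
    destruct (artanh_args_pos k z ltac:(lra) Hz) as [B1 B2].
    pose proof (sqrt_lt_R0 (- k) ltac:(lra)) as Hs.
    replace (sqrt (- k) * ((ln (1 + sqrt (- k) * z) - ln (1 - sqrt (- k) * z)) / (2 * sqrt (- k))))
      with ((ln (1 + sqrt (- k) * z) - ln (1 - sqrt (- k) * z)) / 2) by (field; lra).
    set (y := (ln (1 + sqrt (- k) * z) - ln (1 - sqrt (- k) * z)) / 2).
    pose proof (cosh_pos y).
    replace (1 - k * ((1 - cosh y) / k)) with (cosh y) by (field; lra).
    apply Rmult_eq_reg_l with (sqrt (- k)); [|lra].
    transitivity (sinh y / cosh y); [field; lra|].
    unfold y. rewrite sinh_div_cosh_half_ln by lra. field. lra.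
Qed.

Lemma cosk_arctan_k k z : 0 < 1 + k * z ^ 2 -> cosk k (arctan_k k z) = / sqrt (1 + k * z ^ 2).
Proof.
  intro Hz.
  pose proof (cosk_pos k _ (in_range_arctan_k k z)) as Hc.
  pose proof (one_add_k_tan_k_sqr k _ (in_range_arctan_k k z)) as E.
  rewrite tan_k_arctan_k in E by exact Hz. rewrite E.
  replace (/ cosk k (arctan_k k z) ^ 2) with (Rsqr (/ cosk k (arctan_k k z)))
    by (unfold Rsqr; field; lra).
  rewrite sqrt_Rsqr by (left; apply Rinv_0_lt_compat, Hc).
  field. lra.
Qed.

(** * Geodesic curvature in the chart *)

Definition kron (i j : nat) : R := if Nat.eqb i j then 1 else 0.

Definition dgco (k : R) (i j l : nat) (u : pt) : R :=
  - kron i j * 2 * k * Defs.comp u l / Dk k u ^ 2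
  - k * (kron i l * Defs.comp u j + kron j l * Defs.comp u i) / Dk k u ^ 2
  + 4 * k ^ 2 * Defs.comp u i * Defs.comp u j * Defs.comp u l / Dk k u ^ 3.

Lemma partial_gco k (x y : R) (i j l : nat) : (i < 2)%nat -> (j < 2)%nat -> (l < 2)%nat ->
  Dk k (x, y) <> 0 -> partial (gco k i j) l (x, y) = dgco k i j l (x, y).
Proof.
  intros Hi Hj Hl HD. unfold Dk, dot in HD; simpl in HD.
  destruct i as [|[|i]]; [| |lia]; destruct j as [|[|j]]; [| |lia| | |lia];
  destruct l as [|[|l]]; try lia;
  unfold partial, gco, metric, dgco, kron, Dk, dot, basis, upd, Defs.comp; simpl;
  (apply is_derive_unique; auto_derive; [simpl; try lra | field; simpl; try lra]).
  all: rewrite Rmult_1_r; apply Rmult_integral_contrapositive_currified; assumption.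
Qed.

Lemma gdet_eq k x y : Dk k (x, y) <> 0 -> gdet k (x, y) = / Dk k (x, y) ^ 3.
Proof.
  intro HD. unfold gdet, gco, metric, basis, Dk, dot in *; simpl in *. field. exact HD.
Qed.

Lemma christ_eq k x y (i j m : nat) : (i < 2)%nat -> (j < 2)%nat -> (m < 2)%nat ->
  Dk k (x, y) <> 0 ->
  christ k i j m (x, y)
    = - k * (kron i j * Defs.comp (x, y) m + kron i m * Defs.comp (x, y) j) / Dk k (x, y).
Proof.
  intros Hi Hj Hm HD.
  unfold christ, sum2, ginv. rewrite gdet_eq by exact HD.
  destruct i as [|[|i]]; [| |lia]; destruct j as [|[|j]]; [| |lia| | |lia];
  destruct m as [|[|m]]; try lia;
  rewrite ?partial_gco by (auto; lia);
  unfold dgco, gco, metric, kron, basis, Dk, dot, Defs.comp in *; simpl in *; field; exact HD.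
Qed.

Lemma sqrt_inv_cube D : 0 < D -> sqrt (/ D ^ 3) = / (D * sqrt D).
Proof.
  intro H. rewrite sqrt_inv. f_equal.
  replace (D ^ 3) with ((D * D) * D) by ring.
  rewrite sqrt_mult_alt by nra. rewrite sqrt_square by lra. reflexivity.
Qed.

(* The Christoffel terms are parallel to the velocity, so only the chart
   acceleration contributes to [det2 v (covacc)]. *)
Lemma geod_curv_chart k c s : 0 < Dk k (c s) ->
  geod_curv k c s = det2 (vel c s) (acc c s) / (Dk k (c s) * sqrt (Dk k (c s))).
Proof.
  intro HD. unfold geod_curv, covacc.
  set (u := c s) in *. set (v := vel c s). set (a := acc c s).
  clearbody u v a. destruct u as [x y], v as [v1 v2], a as [a1 a2].
  rewrite gdet_eq, sqrt_inv_cube by lra.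
  unfold sum2. rewrite !christ_eq by (auto; lra).
  assert (0 < sqrt (Dk k (x, y))) by (apply sqrt_lt_R0, HD).
  unfold det2, kron, Defs.comp, Dk, dot in *; simpl in *. field. split; lra.
Qed.

(** * Segment lengths and the signed distance [x] *)

Lemma Dk_perp_shift k (F w : pt) u : dot F w = 0 ->
  Dk k (padd F (pscal u w)) = Dk k F + k * u ^ 2 * dot w w.
Proof.
  destruct F as [f1 f2], w as [w1 w2]. unfold Dk, dot, padd, pscal; simpl. intro H.
  transitivity (1 + k * (f1 * f1 + f2 * f2) + k * u ^ 2 * (w1 * w1 + w2 * w2)
                + 2 * k * u * (f1 * w1 + f2 * w2)); [ring|].
  rewrite H. ring.
Qed.

Lemma metric_perp_shift k (F w : pt) u : dot F w = 0 -> Dk k (padd F (pscal u w)) <> 0 ->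
  metric k (padd F (pscal u w)) w w = dot w w * Dk k F / Dk k (padd F (pscal u w)) ^ 2.
Proof.
  intros H HD. unfold metric. rewrite Dk_perp_shift in HD |- * by exact H.
  replace (dot (padd F (pscal u w)) w) with (u * dot w w).
  - field. exact HD.
  - destruct F as [f1 f2], w as [w1 w2]. unfold dot, padd, pscal in *; simpl in *.
    transitivity (u * (w1 * w1 + w2 * w2) + (f1 * w1 + f2 * w2)); [rewrite H; ring | ring].
Qed.

Lemma Dk_perp_end k (F P : pt) : dot F (psub P F) = 0 ->
  Dk k P = Dk k F + k * dot (psub P F) (psub P F).
Proof.
  intro H. replace P with (padd F (pscal 1 (psub P F))) at 1
    by (destruct P, F; unfold padd, pscal, psub; simpl; f_equal; ring).
  rewrite Dk_perp_shift by exact H. ring.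
Qed.

Lemma sqr_sqrt_div W D : 0 <= W -> 0 < D -> (sqrt W / sqrt D) ^ 2 = W / D.
Proof.
  intros HW HD. assert (0 < sqrt D) by (apply sqrt_lt_R0, HD).
  replace ((sqrt W / sqrt D) ^ 2) with ((sqrt W * sqrt W) / (sqrt D * sqrt D)) by (field; lra).
  rewrite !sqrt_sqrt by lra. reflexivity.
Qed.

Lemma is_RInt_arctan_k k b : (forall u, 0 <= u <= 1 -> 0 < 1 + k * (b * u) ^ 2) ->
  is_RInt (fun u => b * / (1 + k * (b * u) ^ 2)) 0 1 (arctan_k k b).
Proof.
  intro Hd.
  replace (arctan_k k b) with (minus (arctan_k k (b * 1)) (arctan_k k (b * 0))).
  2:{ rewrite Rmult_0_r, Rmult_1_r, arctan_k_0. unfold minus, plus, opp; simpl. ring. }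
  apply (is_RInt_derive (fun u => arctan_k k (b * u))).
  - intros u Hu. rewrite Rmin_left, Rmax_right in Hu by lra.
    replace (b * / (1 + k * (b * u) ^ 2)) with (b * 1 * / (1 + k * (b * u) ^ 2)) by ring.
    apply (is_derive_comp (arctan_k k) (fun u => b * u)).
    + apply is_derive_arctan_k, Hd, Hu.
    + auto_derive; [easy | ring].
  - intros u Hu. rewrite Rmin_left, Rmax_right in Hu by lra.
    specialize (Hd u Hu).
    apply (ex_derive_continuous (fun u => b * / (1 + k * (b * u) ^ 2))).
    auto_derive. lra.
Qed.

Lemma seg_len_perp k (F P : pt) :
  dot F (psub P F) = 0 -> 0 < Dk k F -> 0 < Dk k P ->
  seg_len k F P = arctan_k k (sqrt (dot (psub P F) (psub P F)) / sqrt (Dk k F)).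
Proof.
  intros Hperp HF HP.
  set (W := dot (psub P F) (psub P F)).
  assert (HW : 0 <= W) by (unfold W, dot; nra).
  assert (HsF : 0 < sqrt (Dk k F)) by (apply sqrt_lt_R0, HF).
  set (b := sqrt W / sqrt (Dk k F)).
  assert (Hb2 : b ^ 2 = W / Dk k F) by (apply sqr_sqrt_div; assumption).
  assert (HPF : Dk k P = Dk k F + k * W) by (apply Dk_perp_end, Hperp).
  assert (Du : forall u, 0 <= u <= 1 -> 0 < Dk k (padd F (pscal u (psub P F)))).
  { intros u Hu. rewrite Dk_perp_shift by exact Hperp. fold W.
    replace (Dk k F + k * u ^ 2 * W) with ((1 - u ^ 2) * Dk k F + u ^ 2 * Dk k P)
      by (rewrite HPF; ring).
    assert (0 <= u ^ 2 <= 1) by (simpl; nra).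
    destruct (Req_dec (u ^ 2) 1) as [E|E]; [rewrite E; lra | nra]. }
  assert (Hbu : forall u, 0 <= u <= 1 ->
    1 + k * (b * u) ^ 2 = Dk k (padd F (pscal u (psub P F))) / Dk k F).
  { intros u Hu. rewrite Dk_perp_shift by exact Hperp. fold W.
    replace ((b * u) ^ 2) with (b ^ 2 * u ^ 2) by ring. rewrite Hb2. field. lra. }
  unfold seg_len. fold W.
  rewrite <- (is_RInt_unique _ _ _ _ (is_RInt_arctan_k k b ltac:(intros u Hu;
    rewrite Hbu by exact Hu; apply Rdiv_lt_0_compat; [apply Du, Hu | exact HF]))).
  apply RInt_ext. intros u Hu. rewrite Rmin_left, Rmax_right in Hu by lra.
  specialize (Du u ltac:(lra)). rewrite Hbu by lra.
  rewrite metric_perp_shift by (auto; lra). fold W.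
  set (Du' := Dk k (padd F (pscal u (psub P F)))) in *.
  rewrite sqrt_div_alt, sqrt_mult_alt, sqrt_pow2 by (try apply pow_lt; lra).
  unfold b. assert (Hss : sqrt (Dk k F) * sqrt (Dk k F) = Dk k F) by (apply sqrt_sqrt; lra).
  set (s := sqrt (Dk k F)) in *. rewrite <- Hss.
  match goal with |- ?a = ?b => change (@eq R a b) end. field. split; lra.
Qed.

Lemma cos_sqr_add_sin_sqr x : cos x * cos x + sin x * sin x = 1.
Proof. pose proof (sin2_cos2 x) as H. unfold Rsqr in H. lra. Qed.

Lemma Dk_gam k om t : in_range k t -> Dk k (gam k om t) = / cosk k t ^ 2.
Proof.
  intro Hr. rewrite <- one_add_k_tan_k_sqr by exact Hr.
  unfold Dk, gam, dot; simpl. pose proof (cos_sqr_add_sin_sqr om).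
  transitivity (1 + k * tan_k k t ^ 2 * (cos om * cos om + sin om * sin om)); [ring|].
  rewrite H. ring.
Qed.

Lemma Dk_gam_pos k om t : in_range k t -> 0 < Dk k (gam k om t).
Proof. intro Hr. rewrite Dk_gam by exact Hr. apply Rinv_0_lt_compat, pow_lt, cosk_pos, Hr. Qed.

Lemma vel_gam k om t : in_range k t ->
  vel (gam k om) t = (/ cosk k t ^ 2 * cos om, / cosk k t ^ 2 * sin om).
Proof.
  intro Hr. pose proof (cosk_pos k t Hr) as Hc.
  assert (Hd := is_derive_tan_k k t ltac:(lra)).
  unfold vel, gam; simpl. f_equal; apply is_derive_unique;
    exact (is_derive_scal_l _ _ _ _ Hd).
Qed.

(* The signed distance [x] enters only through [cosk], which is even. *)
Lemma cosk_xsd k om r (P : pt) : in_range k r -> 0 < Dk k P ->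
  tan_k k r = fst P * cos om + snd P * sin om ->
  cosk k (xsd k om r P) = / (cosk k r * sqrt (Dk k P)) /\
  lc k (xsd k om r P) / lc k r = cosk k (xsd k om r P) / cosk k r.
Proof.
  intros Hr HP HT.
  set (F := gam k om r).
  pose proof (cosk_pos k r Hr) as Hc.
  assert (HDF : Dk k F = / cosk k r ^ 2) by (apply Dk_gam, Hr).
  assert (HF : 0 < Dk k F) by (apply Dk_gam_pos, Hr).
  assert (Hperp : dot F (psub P F) = 0).
  { unfold F, gam, dot, psub. destruct P as [p1 p2]. simpl in *.
    pose proof (cos_sqr_add_sin_sqr om).
    transitivity (tan_k k r * (p1 * cos om + p2 * sin om)
                  - tan_k k r ^ 2 * (cos om * cos om + sin om * sin om)); [ring|].
    rewrite H, <- HT. ring. }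
  set (b := sqrt (dot (psub P F) (psub P F)) / sqrt (Dk k F)).
  assert (Hb : 1 + k * b ^ 2 = Dk k P / Dk k F).
  { assert (0 <= dot (psub P F) (psub P F)) by (unfold dot; nra).
    unfold b. rewrite sqr_sqrt_div, (Dk_perp_end k F P Hperp) by assumption. field. lra. }
  assert (Hb0 : 0 < 1 + k * b ^ 2) by (rewrite Hb; apply Rdiv_lt_0_compat; lra).
  assert (Hx : xsd k om r P = arctan_k k b \/ xsd k om r P = - arctan_k k b).
  { unfold xsd. fold F. rewrite seg_len_perp by assumption.
    destruct (Rlt_dec _ 0); [left | right]; reflexivity. }
  assert (Hcx : cosk k (xsd k om r P) = cosk k (arctan_k k b))
    by (destruct Hx as [-> | ->]; [|rewrite cosk_opp]; reflexivity).
  split.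
  - rewrite Hcx, cosk_arctan_k, Hb, HDF by exact Hb0.
    rewrite sqrt_div_alt by (apply Rinv_0_lt_compat, pow_lt, Hc).
    rewrite sqrt_inv, sqrt_pow2 by lra.
    assert (0 < sqrt (Dk k P)) by (apply sqrt_lt_R0, HP).
    field. split; lra.
  - pose proof PI_RGT_0.
    rewrite (lc_cosk k r), (lc_cosk k (xsd k om r P)); [reflexivity | intro Hk..].
    + destruct (in_range_arctan_k k b) as [|Hrange]; [lra|].
      replace (Rabs (xsd k om r P)) with (Rabs (arctan_k k b))
        by (destruct Hx as [-> | ->]; [|rewrite Rabs_Ropp]; reflexivity).
      lra.
    + destruct Hr as [|Hr]; lra.
Qed.

(** * The support line *)

Lemma gam_perp_dir k om r (v : pt) : in_range k r ->
  metric k (gam k om r) (vel (gam k om) r) v = 0 -> fst v * cos om + snd v * sin om = 0.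
Proof.
  intros Hr H. pose proof (cosk_pos k r Hr) as Hc.
  pose proof (one_add_k_tan_k_sqr k r Hr) as HT.
  unfold metric in H. rewrite Dk_gam, vel_gam in H by exact Hr.
  destruct v as [v1 v2]. unfold dot, gam in H. cbn [fst snd] in *.
  set (T := tan_k k r) in *. set (D := / cosk k r ^ 2) in *.
  assert (HD : 0 < D) by (apply Rinv_0_lt_compat, pow_lt, Hc).
  pose proof (cos_sqr_add_sin_sqr om) as E.
  assert (Hnum : D * (D * cos om * v1 + D * sin om * v2)
     - k * (T * cos om * (D * cos om) + T * sin om * (D * sin om))
         * (T * cos om * v1 + T * sin om * v2)
     = D * (v1 * cos om + v2 * sin om)).
  { transitivity (D * (v1 * cos om + v2 * sin om)
       * (D - k * T ^ 2 * (cos om * cos om + sin om * sin om))); [ring|].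
    rewrite E, <- HT. ring. }
  rewrite Hnum in H.
  replace (v1 * cos om + v2 * sin om)
    with (D * (v1 * cos om + v2 * sin om) / D ^ 2 * D) by (field; lra).
  rewrite H. ring.
Qed.

(* [f] is a polar angle of the nonzero vector [(a, b)]. *)
Definition is_arg (a b f : R) : Prop := a * sin f = b * cos f /\ 0 < a * cos f + b * sin f.

Lemma gam_dot_dir k om t : fst (gam k om t) * cos om + snd (gam k om t) * sin om = tan_k k t.
Proof.
  unfold gam; simpl. pose proof (cos_sqr_add_sin_sqr om) as E.
  transitivity (tan_k k t * (cos om * cos om + sin om * sin om)); [ring|]. rewrite E. ring.
Qed.

Lemma parallel_perp_dir (v w : pt) om : 0 < dot v v ->
  fst v * cos om + snd v * sin om = 0 -> det2 v w = 0 -> fst w * cos om + snd w * sin om = 0.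
Proof.
  destruct v as [v1 v2], w as [w1 w2]. unfold dot, det2; simpl. intros Hv Hdot Hdet.
  assert (E : (v1 * v1 + v2 * v2) * (w1 * cos om + w2 * sin om)
              = v1 * w1 * (v1 * cos om + v2 * sin om) + v2 * w2 * (v1 * cos om + v2 * sin om)
                + (v1 * w2 - v2 * w1) * (v1 * sin om - v2 * cos om)) by ring.
  rewrite Hdot, Hdet in E.
  apply Rmult_eq_reg_l with (v1 * v1 + v2 * v2); [|lra]. rewrite E. ring.
Qed.

Lemma is_derive_pos_left (f : R -> R) x l d : is_derive f x l -> 0 < l -> 0 < d ->
  exists t, x - d < t < x /\ f t < f x.
Proof.
  intros Hd Hl Hdp. apply is_derive_Reals in Hd.
  destruct (Hd (l / 2) ltac:(lra)) as [del Hdel].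
  assert (Hm : 0 < Rmin del d) by (apply Rmin_pos; [apply cond_pos | lra]).
  set (h := - Rmin del d / 2).
  assert (Hh : Rabs h < del).
  { unfold h. rewrite Rabs_left by lra. pose proof (Rmin_l del d). lra. }
  specialize (Hdel h ltac:(unfold h; lra) Hh). apply Rabs_def2 in Hdel.
  exists (x + h). split; [unfold h; pose proof (Rmin_r del d); lra|].
  assert (Hq : 0 < (f (x + h) - f x) / h) by lra.
  assert (Hneg : / h < 0) by (apply Rinv_lt_0_compat; unfold h; lra).
  unfold Rdiv in Hq. nra.
Qed.

(* If the normal pointed the other way, the geodesic ray would cross the
   support line just before [F], on the side opposite to [K]. *)
Lemma support_normal_pos k (K : pt -> Prop) (P v : pt) om r :
  0 < dot v v -> in_range k r ->
  fst v * cos om + snd v * sin om = 0 ->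
  det2 v (psub (gam k om r) P) = 0 ->
  (exists q, K q /\ 0 < det2 v (psub q P)) ->
  (exists d, 0 < d /\ forall t, r - d < t < r -> forall q, K q ->
      0 <= det2 v (psub q P) * det2 v (psub (gam k om t) P)) ->
  0 < snd v * cos om - fst v * sin om.
Proof.
  intros Hv Hr Hdot Hon [q [Kq Hq]] [d [Hd Hside]].
  pose proof (cosk_pos k r Hr) as Hc.
  destruct (Rlt_or_le 0 (snd v * cos om - fst v * sin om)) as [Hok|Hbad]; [exact Hok|].
  exfalso.
  assert (Hn : 0 < fst v * sin om - snd v * cos om).
  { destruct v as [v1 v2]. unfold dot in Hv. simpl in *.
    pose proof (cos_sqr_add_sin_sqr om) as E.
    assert (Hsq : (v1 * sin om - v2 * cos om) ^ 2 = v1 * v1 + v2 * v2).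
    { transitivity ((v1 * v1 + v2 * v2) * (cos om * cos om + sin om * sin om)
                    - (v1 * cos om + v2 * sin om) ^ 2); [ring|].
      rewrite E, Hdot. ring. }
    destruct Hbad as [Hbad|Hbad]; [lra|].
    replace (v1 * sin om - v2 * cos om) with 0 in Hsq by lra. nra. }
  destruct (is_derive_pos_left (tan_k k) r (/ cosk k r ^ 2) d
              (is_derive_tan_k k r ltac:(lra))
              ltac:(apply Rinv_0_lt_compat, pow_lt; lra) Hd) as [t [Ht Hlt]].
  specialize (Hside t Ht q Kq).
  assert (E : det2 v (psub (gam k om t) P)
              = (tan_k k t - tan_k k r) * (fst v * sin om - snd v * cos om)
                + det2 v (psub (gam k om r) P))
    by (unfold det2, psub, gam; simpl; ring).
  rewrite Hon, Rplus_0_r in E. rewrite E in Hside.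
  assert ((tan_k k t - tan_k k r) * (fst v * sin om - snd v * cos om) < 0)
    by (apply Rmult_neg_pos; lra).
  nra.
Qed.

Lemma intK_mem (K : pt -> Prop) p : intK K p -> K p.
Proof. intros [e [He H]]. apply H. unfold sqd, dot, psub. simpl. lra. Qed.

Lemma left_side_point (K : pt -> Prop) (P v : pt) : 0 < dot v v ->
  (exists e, 0 < e /\ forall t, 0 < t < e -> intK K (padd P (pscal t (rotl v)))) ->
  exists q, K q /\ 0 < det2 v (psub q P).
Proof.
  intros Hv [e [He H]]. exists (padd P (pscal (e / 2) (rotl v))). split.
  - apply intK_mem, H. lra.
  - replace (det2 v (psub (padd P (pscal (e / 2) (rotl v))) P)) with (e / 2 * dot v v)
      by (unfold det2, dot, psub, padd, pscal, rotl; simpl; ring).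
    apply Rmult_lt_0_compat; lra.
Qed.

Lemma support_angle k (K : pt -> Prop) (P v : pt) om r :
  0 < dot v v -> in_range k r ->
  (exists e, 0 < e /\ forall t, 0 < t < e -> intK K (padd P (pscal t (rotl v)))) ->
  det2 v (psub (gam k om r) P) = 0 ->
  metric k (gam k om r) (vel (gam k om) r) v = 0 ->
  (exists d, 0 < d /\ forall t, r - d < t < r -> forall q, K q ->
      0 <= det2 v (psub q P) * det2 v (psub (gam k om t) P)) ->
  is_arg (snd v) (- fst v) om /\ tan_k k r = fst P * cos om + snd P * sin om.
Proof.
  intros Hv Hr Hccw Hon Hperp Hside.
  assert (Hdot := gam_perp_dir k om r v Hr Hperp).
  assert (Hfoot := parallel_perp_dir v _ om Hv Hdot Hon).
  assert (Hpos := support_normal_pos k K P v om r Hv Hr Hdot Hon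
                    (left_side_point K P v Hv Hccw) Hside).
  split; [split; lra|].
  rewrite <- (gam_dot_dir k om r). apply Rminus_diag_uniq. rewrite <- Hfoot.
  unfold psub. simpl. ring.
Qed.

(** * Derivatives of polar angles *)

Lemma is_arg_polar a b f : is_arg a b f ->
  a = (a * cos f + b * sin f) * cos f /\ b = (a * cos f + b * sin f) * sin f.
Proof.
  intros [H _]. pose proof (cos_sqr_add_sin_sqr f) as E. split.
  - transitivity (a * (cos f * cos f + sin f * sin f)); [rewrite E; ring|].
    transitivity (a * cos f * cos f + (a * sin f) * sin f); [ring|]. rewrite H. ring.
  - transitivity (b * (cos f * cos f + sin f * sin f)); [rewrite E; ring|].
    transitivity (b * sin f * sin f + (b * cos f) * cos f); [ring|]. rewrite <- H. ring.
Qed.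

Lemma is_arg_norm_pos a b f : is_arg a b f -> 0 < a ^ 2 + b ^ 2.
Proof.
  intros [_ H].
  assert (Id : (a ^ 2 + b ^ 2) * (cos f * cos f + sin f * sin f)
               = (a * cos f + b * sin f) ^ 2 + (a * sin f - b * cos f) ^ 2) by ring.
  rewrite cos_sqr_add_sin_sqr, Rmult_1_r in Id. rewrite Id.
  pose proof (pow_lt _ 2 H). pose proof (pow2_ge_0 (a * sin f - b * cos f)). lra.
Qed.

Lemma is_arg_atan a0 b0 f0 a b f : is_arg a0 b0 f0 -> is_arg a b f -> Rabs (f - f0) < PI / 2 ->
  f = f0 + atan ((b * a0 - a * b0) / (a * a0 + b * b0)).
Proof.
  intros H0 H Hf.
  destruct (is_arg_polar _ _ _ H0) as [Ea0 Eb0]. destruct (is_arg_polar _ _ _ H) as [Ea Eb].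
  destruct H0 as [_ HR0]. destruct H as [_ HR].
  set (R0 := a0 * cos f0 + b0 * sin f0) in *. set (R1 := a * cos f + b * sin f) in *.
  apply Rabs_def2 in Hf.
  assert (Hc : 0 < cos (f - f0)) by (apply cos_gt_0; lra).
  replace ((b * a0 - a * b0) / (a * a0 + b * b0)) with (tan (f - f0)).
  - rewrite atan_tan by lra. ring.
  - rewrite Ea0, Eb0, Ea, Eb. unfold tan. rewrite sin_minus, cos_minus.
    rewrite cos_minus in Hc. field. split; [|lra].
    replace (R1 * cos f * (R0 * cos f0) + R1 * sin f * (R0 * sin f0))
      with (R1 * R0 * (cos f * cos f0 + sin f * sin f0)) by ring.
    apply Rgt_not_eq, Rmult_lt_0_compat; [apply Rmult_lt_0_compat|]; lra.
Qed.

Lemma is_derive_arg (f p q : R -> R) (s p' q' : R) :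
  continuous f s -> is_derive p s p' -> is_derive q s q' ->
  locally s (fun t => is_arg (p t) (q t) (f t)) ->
  is_derive f s ((q' * p s - p' * q s) / (p s ^ 2 + q s ^ 2)).
Proof.
  intros Hf Hp Hq Hloc.
  assert (Hs := locally_singleton _ _ Hloc).
  assert (HN := is_arg_norm_pos _ _ _ Hs).
  assert (Hnear : locally s (fun t => Rabs (f t - f s) < PI / 2)).
  { apply (proj1 (filterlim_locally f (f s)) Hf (mkposreal _ PI2_RGT_0)). }
  eapply is_derive_ext_loc.
  { eapply filter_imp; [|apply filter_and; [exact Hloc | exact Hnear]].
    intros t [Ht Hd]. symmetry. exact (is_arg_atan _ _ _ _ _ _ Hs Ht Hd). }
  auto_derive.
  - repeat split; try (eexists; eassumption). simpl in HN. lra.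
  - replace (Derive (fun x => p x) s) with p' by (symmetry; apply is_derive_unique, Hp).
    replace (Derive (fun x => q x) s) with q' by (symmetry; apply is_derive_unique, Hq).
    replace (q s * p s + - (p s * q s)) with 0 by ring.
    simpl in HN. field. lra.
Qed.

Lemma dot_gam k th t : dot (gam k th t) (gam k th t) = tan_k k t ^ 2.
Proof.
  unfold dot, gam; simpl. pose proof (cos_sqr_add_sin_sqr th) as E.
  transitivity (tan_k k t ^ 2 * (cos th * cos th + sin th * sin th)); [ring|]. rewrite E. ring.
Qed.

Lemma ell_sqr_gam k th t : in_range k t ->
  ell k t ^ 2 = dot (gam k th t) (gam k th t) / Dk k (gam k th t).
Proof.
  intro Hr. pose proof (cosk_pos k t Hr).
  rewrite dot_gam, Dk_gam by exact Hr. unfold tan_k. fold (cosk k t). field. lra.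
Qed.

Lemma gam_is_arg k th t : 0 <= t -> in_range k t -> 0 < dot (gam k th t) (gam k th t) ->
  is_arg (fst (gam k th t)) (snd (gam k th t)) th.
Proof.
  intros H0 Hr Hd. rewrite dot_gam in Hd.
  pose proof (tan_k_nonneg k t H0 Hr) as HT.
  assert (HT' : 0 < tan_k k t) by (destruct HT as [|HT]; [assumption | rewrite <- HT in Hd; lra]).
  pose proof (gam_dot_dir k th t).
  unfold is_arg, gam in *; simpl in *. split; [ring | lra].
Qed.

Lemma locally_pos (g : R -> R) s : continuous g s -> 0 < g s -> locally s (fun t => 0 < g t).
Proof.
  intros Hc Hg.
  eapply filter_imp; [|exact (proj1 (filterlim_locally g (g s)) Hc (mkposreal _ Hg))].
  intros t Ht. change (Rabs (g t - g s) < g s) in Ht. apply Rabs_def2 in Ht. lra.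
Qed.

Lemma ell_sqr_mul_Derive_angle k (c : R -> pt) (rho th : R -> R) s :
  (forall t, 0 <= rho t /\ in_range k (rho t) /\ c t = gam k (th t) (rho t)) ->
  (c s <> origin -> continuous th s) ->
  ex_derive (fun t => fst (c t)) s -> ex_derive (fun t => snd (c t)) s ->
  ell k (rho s) ^ 2 * Derive th s = det2 (c s) (vel c s) / Dk k (c s).
Proof.
  intros Hpol Hcont H1 H2.
  destruct (Hpol s) as [_ [Hr Hcs]].
  rewrite (ell_sqr_gam k (th s) (rho s) Hr), <- Hcs.
  assert (HD : 0 < Dk k (c s)) by (rewrite Hcs; apply Dk_gam_pos, Hr).
  destruct (Req_dec (dot (c s) (c s)) 0) as [E0|E0].
  - unfold dot, det2 in *.
    replace (fst (c s)) with 0 by nra. replace (snd (c s)) with 0 by nra.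
    field. lra.
  - assert (Hpos : 0 < dot (c s) (c s)) by (unfold dot in *; nra).
    assert (Hloc : locally s (fun t => 0 < dot (c t) (c t))).
    { apply (locally_pos (fun t => dot (c t) (c t))); [|exact Hpos].
      apply (ex_derive_continuous (fun t => dot (c t) (c t))).
      unfold dot.
      apply (ex_derive_plus (fun t => fst (c t) * fst (c t)) (fun t => snd (c t) * snd (c t)));
        [apply (ex_derive_mult (fun t => fst (c t))) | apply (ex_derive_mult (fun t => snd (c t)))];
        assumption. }
    assert (Harg : locally s (fun t => is_arg (fst (c t)) (snd (c t)) (th t))).
    { eapply filter_imp; [|exact Hloc]. intros t Ht. cbv beta in Ht.
      destruct (Hpol t) as [Ht0 [Htr Hct]]. rewrite Hct in Ht |- *.
      exact (gam_is_arg k (th t) (rho t) Ht0 Htr Ht). }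
    assert (Hc0 : c s <> origin)
      by (intro Z; rewrite Z in Hpos; unfold dot, origin in Hpos; simpl in Hpos; lra).
    assert (Hth := is_derive_arg th (fun t => fst (c t)) (fun t => snd (c t)) s _ _
      (Hcont Hc0) (Derive_correct _ _ H1) (Derive_correct _ _ H2) Harg).
    rewrite (is_derive_unique _ _ _ Hth). unfold vel, det2, dot in *. simpl.
    field. split; lra.
Qed.

Lemma Derive_normal_angle (c : R -> pt) (om : R -> R) s :
  (forall t, is_arg (snd (vel c t)) (- fst (vel c t)) (om t)) -> continuous om s ->
  ex_derive (Derive (fun t => fst (c t))) s -> ex_derive (Derive (fun t => snd (c t))) s ->
  Derive om s = det2 (vel c s) (acc c s) / dot (vel c s) (vel c s).
Proof.
  intros Harg Hc H1 H2.
  assert (Hd := is_derive_arg om (Derive (fun t => snd (c t)))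
    (fun t => - Derive (fun t => fst (c t)) t) s _ _ Hc (Derive_correct _ _ H2)
    (is_derive_opp _ _ _ (Derive_correct _ _ H1)) (filter_forall _ Harg)).
  pose proof (is_arg_norm_pos _ _ _ (Harg s)) as HN.
  rewrite (is_derive_unique _ _ _ Hd). unfold vel, acc, det2, dot in *. simpl in *.
  unfold opp; simpl. field. lra.
Qed.

(** * Unit speed and the curvature ratio *)

Lemma metric_unit_chart k (P v : pt) : 0 < Dk k P -> metric k P v v = 1 ->
  Dk k P * dot v v - k * dot P v ^ 2 = Dk k P ^ 2.
Proof.
  intros HD H. unfold metric in H.
  rewrite <- (Rmult_1_l (Dk k P ^ 2)), <- H. field. lra.
Qed.

Lemma metric_unit_speed_pos k (P v : pt) : 0 < Dk k P -> metric k P v v = 1 -> 0 < dot v v.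
Proof.
  intros HD H. pose proof (metric_unit_chart k P v HD H) as E.
  destruct v as [v1 v2]. unfold dot in *. simpl in *.
  destruct (Req_dec (v1 * v1 + v2 * v2) 0) as [Z|Z]; [|nra].
  assert (v1 = 0) by nra. assert (v2 = 0) by nra. subst.
  replace (Dk k P * (0 * 0 + 0 * 0) - k * (fst P * 0 + snd P * 0) ^ 2) with 0 in E by ring.
  nra.
Qed.

(* Lagrange's identity splits [g(v, v) = 1] into tangential and normal parts. *)
Lemma unit_speed_normal k (P v : pt) om : 0 < Dk k P ->
  metric k P v v = 1 -> is_arg (snd v) (- fst v) om ->
  Dk k P ^ 2 = dot v v * (1 + k * (fst P * cos om + snd P * sin om) ^ 2).
Proof.
  intros HD Hunit Harg.
  destruct (is_arg_polar _ _ _ Harg) as [Ev2 Ev1].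
  pose proof (cos_sqr_add_sin_sqr om) as E.
  set (N := snd v * cos om + - fst v * sin om) in *.
  rewrite <- (metric_unit_chart k P v HD Hunit). destruct P as [p1 p2], v as [v1 v2].
  unfold Dk, dot in *. simpl in *.
  assert (Hv : v1 * v1 + v2 * v2 = N * N).
  { transitivity ((- v1) * (- v1) + v2 * v2); [ring|]. rewrite Ev1, Ev2.
    transitivity (N * N * (cos om * cos om + sin om * sin om)); [ring|]. rewrite E. ring. }
  assert (Hdet : (p1 * cos om + p2 * sin om) * N = p1 * v2 - p2 * v1).
  { transitivity (p1 * v2 + p2 * (- v1)); [|ring]. rewrite Ev1, Ev2. ring. }
  transitivity (v1 * v1 + v2 * v2 + k * ((p1 * cos om + p2 * sin om) * N) ^ 2).
  - rewrite Hdet. ring.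
  - rewrite Hv. ring.
Qed.

Lemma geod_curv_ratio k (c : R -> pt) s om r :
  0 < Dk k (c s) -> in_range k r -> metric k (c s) (vel c s) (vel c s) = 1 ->
  is_arg (snd (vel c s)) (- fst (vel c s)) om ->
  tan_k k r = fst (c s) * cos om + snd (c s) * sin om ->
  geod_curv k c s * (cosk k (xsd k om r (c s)) / cosk k r)
    = det2 (vel c s) (acc c s) / dot (vel c s) (vel c s).
Proof.
  intros HD Hr Hunit Harg HT.
  pose proof (cosk_pos k r Hr) as Hc.
  assert (HV : dot (vel c s) (vel c s) = Dk k (c s) ^ 2 * cosk k r ^ 2).
  { rewrite (unit_speed_normal k _ _ om HD Hunit Harg), <- HT, one_add_k_tan_k_sqr by exact Hr.
    field. lra. }
  rewrite geod_curv_chart, (proj1 (cosk_xsd k om r (c s) Hr HD HT)), HV by exact HD.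
  assert (Hs : 0 < sqrt (Dk k (c s))) by (apply sqrt_lt_R0, HD).
  assert (Hss : sqrt (Dk k (c s)) * sqrt (Dk k (c s)) = Dk k (c s)) by (apply sqrt_sqrt; lra).
  set (q := sqrt (Dk k (c s))) in *. rewrite <- Hss. field. split; lra.
Qed.

(** * The integral over one period *)

Lemma continuous_Rplus (f g : R -> R) x :
  continuous f x -> continuous g x -> continuous (fun t => f t + g t) x.
Proof. apply (continuous_plus f g). Qed.

Lemma continuous_Rminus (f g : R -> R) x :
  continuous f x -> continuous g x -> continuous (fun t => f t - g t) x.
Proof. apply (continuous_minus f g). Qed.

Lemma continuous_Rmult (f g : R -> R) x :
  continuous f x -> continuous g x -> continuous (fun t => f t * g t) x.
Proof. apply (continuous_mult f g). Qed.

Lemma continuous_Rdiv (f g : R -> R) x :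
  continuous f x -> continuous g x -> g x <> 0 -> continuous (fun t => f t / g t) x.
Proof.
  intros Hf Hg H0. apply continuous_Rmult; [exact Hf|]. apply (continuous_Rinv_comp g x Hg H0).
Qed.

Section RadialPrimitive.

Variables (k : R) (cx cy vx vy ax ay : R -> R).
Hypothesis Hcx : forall s, is_derive cx s (vx s).
Hypothesis Hcy : forall s, is_derive cy s (vy s).
Hypothesis Hvx : forall s, is_derive vx s (ax s).
Hypothesis Hvy : forall s, is_derive vy s (ay s).

Let D t := 1 + k * (cx t * cx t + cy t * cy t).
Let Q t := cx t * vx t + cy t * vy t.
Let V t := vx t * vx t + vy t * vy t.

Hypothesis Hunit : forall t, D t * V t - k * Q t ^ 2 = D t ^ 2.

Ltac derive_curve :=
  auto_derive; [repeat split; try (eexists; now eauto); try lra|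
  rewrite ?(is_derive_unique (fun x => cx x) _ _ (Hcx _)),
          ?(is_derive_unique (fun x => cy x) _ _ (Hcy _)),
          ?(is_derive_unique (fun x => vx x) _ _ (Hvx _)),
          ?(is_derive_unique (fun x => vy x) _ _ (Hvy _))].

Lemma unit_speed_deriv s :
  D s * (vx s * ax s + vy s * ay s) = k * Q s * (cx s * ax s + cy s * ay s + 2 * D s).
Proof.
  set (N := fun t => D t * V t - k * Q t ^ 2 - D t ^ 2).
  assert (HN : forall t, N t = 0) by (intro t; unfold N; rewrite Hunit; ring).
  assert (H0 : is_derive N s 0).
  { apply (is_derive_ext (fun _ => 0)); [intro t; symmetry; apply HN|].
    exact (is_derive_const _ s). }
  assert (H1 : is_derive N s (2 * (D s * (vx s * ax s + vy s * ay s)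
                  - k * Q s * (cx s * ax s + cy s * ay s + 2 * D s)))).
  { unfold N, D, V, Q. derive_curve. ring. }
  pose proof (is_derive_unique _ _ _ H0) as U0. rewrite (is_derive_unique _ _ _ H1) in U0.
  lra.
Qed.

Let density s := (cx s * vy s - cy s * vx s) / D s * ((vx s * ay s - vy s * ax s) / V s).

Lemma is_derive_radial_primitive s : 0 < D s -> 0 < V s ->
  is_derive (fun t => arctan_k k (Q t / D t)) s (1 - density s).
Proof.
  intros HD HV.
  pose proof (Hunit s) as E1. pose proof (unit_speed_deriv s) as U.
  set (ca := cx s * ax s + cy s * ay s) in *. set (va := vx s * ax s + vy s * ay s) in *.
  assert (Hphi : 1 + k * (Q s / D s) ^ 2 = V s / D s)
    by (field_simplify_eq; lra).
  assert (HQD : is_derive (fun t => Q t / D t) s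
                  (((V s + ca) * D s - 2 * k * Q s ^ 2) / D s ^ 2)).
  { unfold Q, D, V, ca in *. derive_curve. field. lra. }
  assert (Hkey : D s * ca - 2 * k * Q s ^ 2 + Q s * va - V s * ca = 0).
  { apply Rmult_eq_reg_l with (D s); [|lra].
    transitivity (ca * (D s ^ 2 + k * Q s ^ 2 - D s * V s)
                  + Q s * (D s * va - k * Q s * (ca + 2 * D s))); [ring|].
    rewrite U, <- E1. ring. }
  assert (Hbinet : (cx s * vy s - cy s * vx s) * (vx s * ay s - vy s * ax s)
                   = Q s * va - V s * ca) by (unfold Q, V, ca, va; ring).
  replace (1 - density s)
    with (((V s + ca) * D s - 2 * k * Q s ^ 2) / D s ^ 2 * / (1 + k * (Q s / D s) ^ 2)).
  - apply (is_derive_comp (arctan_k k) (fun t => Q t / D t)); [|exact HQD].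
    apply is_derive_arctan_k. rewrite Hphi. apply Rdiv_lt_0_compat; assumption.
  - rewrite Hphi. unfold density. fold (D s) (V s).
    replace ((V s + ca) * D s - 2 * k * Q s ^ 2)
      with (D s * V s - (cx s * vy s - cy s * vx s) * (vx s * ay s - vy s * ax s))
      by (rewrite Hbinet; lra).
    field. lra.
Qed.

Lemma continuous_density s : continuous ax s -> continuous ay s ->
  0 < D s -> 0 < V s -> continuous density s.
Proof.
  intros Hax Hay HD HV.
  assert (C : forall f g : R -> R, (forall t, is_derive f t (g t)) -> continuous f s)
    by (intros f g Hf; apply (ex_derive_continuous f); exists (g s); apply Hf).
  pose proof (C _ _ Hcx). pose proof (C _ _ Hcy). pose proof (C _ _ Hvx). pose proof (C _ _ Hvy).
  unfold density, D, V in *.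
  apply continuous_Rmult; apply continuous_Rdiv; try (apply Rgt_not_eq; assumption).
  - apply continuous_Rminus; apply continuous_Rmult; assumption.
  - apply continuous_Rplus; [apply continuous_const|].
    apply continuous_Rmult; [apply continuous_const|].
    apply continuous_Rplus; apply continuous_Rmult; assumption.
  - apply continuous_Rminus; apply continuous_Rmult; assumption.
  - apply continuous_Rplus; apply continuous_Rmult; assumption.
Qed.

(* [arctan_k (<c, v> / D)] is a periodic primitive of [1 - density]. *)
Lemma is_RInt_density L :
  (forall t, 0 < D t) -> (forall t, 0 < V t) ->
  (forall t, continuous ax t) -> (forall t, continuous ay t) ->
  cx L = cx 0 -> cy L = cy 0 -> vx L = vx 0 -> vy L = vy 0 ->
  is_RInt density 0 L L.
Proof.
  intros HD HV Hax Hay P1 P2 P3 P4.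
  assert (HG : is_RInt (fun t => 1 - density t) 0 L
                 (minus (arctan_k k (Q L / D L)) (arctan_k k (Q 0 / D 0)))).
  { apply (is_RInt_derive (fun t => arctan_k k (Q t / D t))); intros t _.
    - apply is_derive_radial_primitive; auto.
    - apply continuous_Rminus; [apply continuous_const | apply continuous_density; auto]. }
  replace (minus (arctan_k k (Q L / D L)) (arctan_k k (Q 0 / D 0))) with 0 in HG
    by (unfold Q, D; rewrite P1, P2, P3, P4, minus_eq_zero; reflexivity).
  assert (H := is_RInt_minus _ _ _ _ _ _ (is_RInt_const 0 L 1) HG).
  unfold minus, plus, opp, scal in H. simpl in H.
  change (mult (L - 0) 1) with ((L - 0) * 1) in H.
  replace ((L - 0) * 1 + - 0) with L in H by ring.
  eapply is_RInt_ext; [|exact H]. intros t _.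
  match goal with |- ?a = ?b => change (@eq R a b) end. cbv beta. ring.
Qed.

End RadialPrimitive.

Definition boundary_density (k : R) (c : R -> pt) (s : R) : R :=
  det2 (c s) (vel c s) / Dk k (c s) * (det2 (vel c s) (acc c s) / dot (vel c s) (vel c s)).

Lemma Derive_periodic (f : R -> R) L :
  (forall s, f (s + L) = f s) -> ex_derive f L -> Derive f L = Derive f 0.
Proof.
  intros Hp Hd.
  assert (H : is_derive (fun t => f (t + L)) 0 (1 * Derive f L)).
  { apply (is_derive_comp f (fun t => t + L)).
    - rewrite Rplus_0_l. apply Derive_correct, Hd.
    - auto_derive; [easy | ring]. }
  apply (is_derive_ext _ f) in H; [|intro t; apply Hp].
  rewrite (is_derive_unique _ _ _ H). ring.
Qed.

Lemma is_RInt_boundary_density k (c : R -> pt) L :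
  (forall s, ex_derive (fun t => fst (c t)) s /\ ex_derive (fun t => snd (c t)) s /\
      ex_derive (Derive (fun t => fst (c t))) s /\ ex_derive (Derive (fun t => snd (c t))) s /\
      continuous (Derive (Derive (fun t => fst (c t)))) s /\
      continuous (Derive (Derive (fun t => snd (c t)))) s) ->
  (forall s, c (s + L) = c s) ->
  (forall s, 0 < Dk k (c s)) ->
  (forall s, metric k (c s) (vel c s) (vel c s) = 1) ->
  is_RInt (boundary_density k c) 0 L L.
Proof.
  intros HC2 Hper HD Hunit.
  set (cx := fun t => fst (c t)). set (cy := fun t => snd (c t)).
  assert (Hcx : forall s, cx (s + L) = cx s) by (intro s; unfold cx; rewrite Hper; reflexivity).
  assert (Hcy : forall s, cy (s + L) = cy s) by (intro s; unfold cy; rewrite Hper; reflexivity).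
  apply (is_RInt_density k cx cy (Derive cx) (Derive cy) (Derive (Derive cx)) (Derive (Derive cy)));
    try (intro s; apply Derive_correct; apply (HC2 s)).
  - intro t. apply (metric_unit_chart k (c t) (vel c t) (HD t) (Hunit t)).
  - intro t. apply (HD t).
  - intro t. apply (metric_unit_speed_pos k (c t) (vel c t) (HD t) (Hunit t)).
  - intro t. apply (HC2 t).
  - intro t. apply (HC2 t).
  - rewrite <- (Rplus_0_l L). apply Hcx.
  - rewrite <- (Rplus_0_l L). apply Hcy.
  - apply Derive_periodic; [exact Hcx | apply (HC2 L)].
  - apply Derive_periodic; [exact Hcy | apply (HC2 L)].
Qed.

Theorem theorem5p2
  (k : R) (K : pt -> Prop) (c : R -> pt) (L : R)
  (om r rho th : R -> R)
  (* K compact convex with nonempty intK, inside M *)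
  (HK : compact_convex_body k K)
  (* c : arclength parametrisation of bdry K, once around, period L *)
  (HL : 0 < L)
  (Hper : forall s, c (s + L) = c s)
  (Hinj : forall s t, 0 <= s < L -> 0 <= t < L -> c s = c t -> s = t)
  (Himg : forall p, bdry K p <-> exists s, 0 <= s < L /\ c s = p)
  (HC2 : forall s,
      ex_derive (fun t => fst (c t)) s /\ ex_derive (fun t => snd (c t)) s /\
      ex_derive (Derive (fun t => fst (c t))) s /\
      ex_derive (Derive (fun t => snd (c t))) s /\
      continuous (Derive (Derive (fun t => fst (c t)))) s /\
      continuous (Derive (Derive (fun t => snd (c t)))) s)
  (Hunit : forall s, metric k (c s) (vel c s) (vel c s) = 1)
  (* counterclockwise: K lies to the left of c *)
  (Hccw : forall s, exists e, 0 < e /\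
      forall t, 0 < t < e -> intK K (padd (c s) (pscal t (rotl (vel c s)))))
  (* omega, r : support line lambda at P = c s (chart line through c s with
     direction c' s) is perpendicular to gamma_omega at F = gamma_omega(r),
     K on the side of lambda containing gamma_omega(t), t < r; omega continuous *)
  (Hom_cont : forall s, continuous om s)
  (Hr_range : forall s, in_range k (r s))
  (HF_on : forall s, det2 (vel c s) (psub (gam k (om s) (r s)) (c s)) = 0)
  (HF_perp : forall s,
      metric k (gam k (om s) (r s)) (vel (gam k (om s)) (r s)) (vel c s) = 0)
  (Hside : forall s, exists d, 0 < d /\ forall t, r s - d < t < r s ->
      forall q, K q ->
        0 <= det2 (vel c s) (psub q (c s)) *
             det2 (vel c s) (psub (gam k (om s) t) (c s)))
  (* geodesic polar coordinates (rho, theta) of P = c s about O,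
     theta continuous wherever P <> O *)
  (Hpolar : forall s, 0 <= rho s /\ in_range k (rho s) /\
      c s = gam k (th s) (rho s))
  (Hth_cont : forall s, c s <> origin -> continuous th s) :
  let x s := xsd k (om s) (r s) (c s) in
  let kg s := geod_curv k c s in
  L = RInt (fun s => ell k (rho s) ^ 2 * Derive om s * Derive th s) 0 L /\
  L = RInt (fun s => kg s * ell k (rho s) ^ 2 *
                     (lc k (x s) / lc k (r s)) * Derive th s) 0 L /\
  L = RInt (fun s => kg s * ell k (rho s) ^ 2 *
                     ((1 - k * aa k (x s)) / (1 - k * aa k (r s))) * Derive th s) 0 L.
Proof.
  intros x kg.
  assert (HD : forall s, 0 < Dk k (c s))
    by (intro s; destruct (Hpolar s) as [_ [Hr ->]]; apply Dk_gam_pos, Hr).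
  assert (Hsupp : forall s, is_arg (snd (vel c s)) (- fst (vel c s)) (om s) /\
                    tan_k k (r s) = fst (c s) * cos (om s) + snd (c s) * sin (om s))
    by (intro s; apply (support_angle k K (c s) (vel c s) (om s) (r s)); auto;
        exact (metric_unit_speed_pos k _ _ (HD s) (Hunit s))).
  assert (Hom : forall s, Derive om s = det2 (vel c s) (acc c s) / dot (vel c s) (vel c s))
    by (intro s; apply (Derive_normal_angle c om s (fun t => proj1 (Hsupp t)) (Hom_cont s));
        apply HC2).
  assert (Hth : forall s, ell k (rho s) ^ 2 * Derive th s = det2 (c s) (vel c s) / Dk k (c s))
    by (intro s; apply (ell_sqr_mul_Derive_angle k c rho th s Hpolar (Hth_cont s)); apply HC2).
  assert (Hkg : forall s, kg s * (cosk k (x s) / cosk k (r s)) = Derive om s).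
  { intro s. destruct (Hsupp s) as [Harg Hfoot].
    rewrite Hom.
    exact (geod_curv_ratio k c s (om s) (r s) (HD s) (Hr_range s) (Hunit s) Harg Hfoot). }
  assert (Hint : forall f, (forall s, f s = boundary_density k c s) -> L = RInt f 0 L).
  { intros f Hf. rewrite (RInt_ext f (boundary_density k c)) by (intros; apply Hf).
    symmetry. apply is_RInt_unique, is_RInt_boundary_density; auto. }
  split; [|split]; apply Hint; intro s;
    unfold boundary_density; rewrite <- (Hom s), <- (Hth s), <- (Hkg s); unfold x;
    try rewrite (proj2 (cosk_xsd k (om s) (r s) (c s) (Hr_range s) (HD s) (proj2 (Hsupp s))));
    unfold cosk; ring.
Qed.
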